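(* There are no semi-real quaternionic rectifying curves lying fully in $\mathcal{Q}_v$ whose curvatures $\kappa(s)$, $k(s)$ and $(r-\varepsilon_t\varepsilon_T\varepsilon_{N_1}\kappa)(s)$ are all non-zero constants.
   Context: $\mathcal{Q}_v$ denotes the semi-real quaternions, identified with the semi-Euclidean space $\mathbb{R}^4_2$ with inner product $h(p,q)=p_1q_1+p_2q_2-p_3q_3-p_4q_4$. For a unit speed semi-real quaternionic curve $\beta$ (i.e. $h(T,T)=\varepsilon_T=\pm1$, $T=\beta'$) with non-null Serret–Frenet frame $\{T,N_1,N_2,N_3\}$ the Frenet equations are $T'=\varepsilon_{N_1}\kappa N_1$, $N_1'=-\varepsilon_t\varepsilon_{N_1}\kappa T+\varepsilon_{n_1}kN_2$, $N_2'=-\varepsilon_t kN_1+\varepsilon_{n_1}(r-\varepsilon_t\varepsilon_T\varepsilon_{N_1}\kappa)N_3$, $N_3'=-\varepsilon_{n_2}(r-\varepsilon_t\varepsilon_T\varepsilon_{N_1}\kappa)N_2$, where $\kappa$ is the principal curvature of $\beta$, $k$ and $r$ are the curvature and torsion of the associated spatial quaternionic curve in $\mathbb{R}^3_1$ with frame signs $\varepsilon_t,\varepsilon_{n_1},\varepsilon_{n_2}\in\{\pm1\}$, and $h(N_1,N_1)=\varepsilon_{N_1}$, $h(N_2,N_2)=\varepsilon_{n_1}\varepsilon_T$, $h(N_3,N_3)=\varepsilon_{n_2}\varepsilon_T$. $\beta$ is a semi-real quaternionic rectifying curve if $\beta(s)=\lambda(s)T(s)+\mu(s)N_2(s)+\nu(s)N_3(s)$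 for some differentiable functions $\lambda,\mu,\nu$. *)

From Stdlib Require Import Reals.
From Coquelicot Require Import Coquelicot.
Open Scope R_scope.

(* The semi-real quaternions Q_v, identified with R^4_2. *)
Record V4 := mkV4 { c1 : R; c2 : R; c3 : R; c4 : R }.

Definition h (p q : V4) : R :=
  c1 p * c1 q + c2 p * c2 q - c3 p * c3 q - c4 p * c4 q.

Definition vadd (p q : V4) : V4 :=
  mkV4 (c1 p + c1 q) (c2 p + c2 q) (c3 p + c3 q) (c4 p + c4 q).
Definition vscal (a : R) (p : V4) : V4 :=
  mkV4 (a * c1 p) (a * c2 p) (a * c3 p) (a * c4 p).

Definition is_sign (e : R) : Prop := e = 1 \/ e = -1.

Definition in_I (a b : Rbar) (s : R) : Prop := Rbar_lt a s /\ Rbar_lt s b.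

Definition is_derive4 (f : R -> V4) (s : R) (f' : V4) : Prop :=
  is_derive (fun t => c1 (f t)) s (c1 f') /\
  is_derive (fun t => c2 (f t)) s (c2 f') /\
  is_derive (fun t => c3 (f t)) s (c3 f') /\
  is_derive (fun t => c4 (f t)) s (c4 f').

(* The data of a unit speed semi-real quaternionic curve beta on I with a
   non-null Serret–Frenet frame {T,N1,N2,N3}, principal curvature kappa,
   and curvature k and torsion r of the associated spatial quaternionic
   curve, with frame signs eT, eN1, et, en1, en2. *)
Definition semi_real_frenet_curve (a b : Rbar)
    (beta T N1 N2 N3 : R -> V4) (kappa k r : R -> R)
    (eT eN1 et en1 en2 : R) : Prop :=
  is_sign eT /\ is_sign eN1 /\ is_sign et /\ is_sign en1 /\ is_sign en2 /\
  forall s, in_I a b s ->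
    is_derive4 beta s (T s) /\
    h (T s) (T s) = eT /\
    h (N1 s) (N1 s) = eN1 /\
    h (N2 s) (N2 s) = en1 * eT /\
    h (N3 s) (N3 s) = en2 * eT /\
    h (T s) (N1 s) = 0 /\ h (T s) (N2 s) = 0 /\ h (T s) (N3 s) = 0 /\
    h (N1 s) (N2 s) = 0 /\ h (N1 s) (N3 s) = 0 /\ h (N2 s) (N3 s) = 0 /\
    is_derive4 T s (vscal (eN1 * kappa s) (N1 s)) /\
    is_derive4 N1 s
      (vadd (vscal (- et * eN1 * kappa s) (T s)) (vscal (en1 * k s) (N2 s))) /\
    is_derive4 N2 s
      (vadd (vscal (- et * k s) (N1 s))
            (vscal (en1 * (r s - et * eT * eN1 * kappa s)) (N3 s))) /\
    is_derive4 N3 s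
      (vscal (- en2 * (r s - et * eT * eN1 * kappa s)) (N2 s)).

Definition rectifying (a b : Rbar) (beta T N2 N3 : R -> V4)
    (lambda mu nu : R -> R) : Prop :=
  forall s, in_I a b s ->
    ex_derive lambda s /\ ex_derive mu s /\ ex_derive nu s /\
    beta s = vadd (vscal (lambda s) (T s))
                  (vadd (vscal (mu s) (N2 s)) (vscal (nu s) (N3 s))).

From Pilot Require Import Defs.
From Stdlib Require Import Reals Lra.
From Coquelicot Require Import Coquelicot.
Open Scope R_scope.

(* Write A, B, C, D for the components h(beta, X) of the position vector along
   X = T, N1, N2, N3.  A rectifying curve has B = 0 on I, and the Frenet
   equations give A' = eT, and, with constant curvatures, B' = 0 forces C to
   be proportional to A.  Differentiating once more makes D constant, so
   0 = D' is a nonzero multiple of C; then 0 = C' is a nonzero multiple of D,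
   and D = 0 contradicts C1 C2 D = et eN1 eT kappa <> 0. *)

Lemma in_I_inhabited (a b : Rbar) : Rbar_lt a b -> exists s, in_I a b s.
Proof.
  intros Hab; unfold in_I.
  destruct a as [x| |], b as [y| |]; simpl in Hab; try contradiction.
  - exists ((x + y) / 2); simpl; split; lra.
  - exists (x + 1); simpl; split; lra.
  - exists (y - 1); simpl; split; lra.
  - exists 0; simpl; split; exact I.
Qed.

Lemma in_I_locally (a b : Rbar) (s : R) : in_I a b s -> locally s (in_I a b).
Proof.
  apply (open_and (fun u : R => Rbar_lt a u) (fun u : R => Rbar_lt u b)).
  - apply open_Rbar_gt.
  - apply open_Rbar_lt.
Qed.

Lemma is_derive_eq_on (a b : Rbar) (f g : R -> R) (s l m : R) :
  in_I a b s -> (forall t, in_I a b t -> f t = g t) ->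
  is_derive f s l -> is_derive g s m -> l = m.
Proof.
  intros Hs Hfg Hf Hg.
  assert (Hg' : is_derive g s l).
  { apply (is_derive_ext_loc f g s l); [|exact Hf].
    apply (filter_imp (in_I a b)); [exact Hfg | exact (in_I_locally a b s Hs)]. }
  rewrite <- (is_derive_unique g s l Hg'). exact (is_derive_unique g s m Hg).
Qed.

Lemma is_derive_const_on (a b : Rbar) (f : R -> R) (c s l : R) :
  in_I a b s -> (forall t, in_I a b t -> f t = c) -> is_derive f s l -> l = 0.
Proof.
  intros Hs Hf Hd. exact (is_derive_eq_on a b f _ s l 0 Hs Hf Hd (is_derive_const c s)).
Qed.

Lemma sign_sqr (e : R) : is_sign e -> e * e = 1.
Proof. intros [-> | ->]; ring. Qed.

Lemma sign_neq0 (e : R) : is_sign e -> e <> 0.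
Proof. intros [-> | ->]; lra. Qed.

Lemma hC (p q : V4) : h p q = h q p.
Proof. unfold h; ring. Qed.

Lemma h_vaddr (p q w : V4) : h p (vadd q w) = h p q + h p w.
Proof. unfold h, vadd; simpl; ring. Qed.

Lemma h_vaddl (p q w : V4) : h (vadd q w) p = h q p + h w p.
Proof. unfold h, vadd; simpl; ring. Qed.

Lemma h_vscalr (p q : V4) (c : R) : h p (vscal c q) = c * h p q.
Proof. unfold h, vscal; simpl; ring. Qed.

Lemma h_vscall (p q : V4) (c : R) : h (vscal c q) p = c * h q p.
Proof. unfold h, vscal; simpl; ring. Qed.

Lemma is_derive_Rmult (f g : R -> R) (s df dg : R) :
  is_derive f s df -> is_derive g s dg ->
  is_derive (fun t => f t * g t) s (df * g s + f s * dg).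
Proof. intros Hf Hg. apply (is_derive_mult f g s df dg Hf Hg); intros; apply Rmult_comm. Qed.

Lemma is_derive_h (f g : R -> V4) (s : R) (f' g' : V4) :
  is_derive4 f s f' -> is_derive4 g s g' ->
  is_derive (fun t => h (f t) (g t)) s (h f' (g s) + h (f s) g').
Proof.
  intros (F1 & F2 & F3 & F4) (G1 & G2 & G3 & G4).
  replace (h f' (g s) + h (f s) g') with
    (Defs.c1 f' * Defs.c1 (g s) + Defs.c1 (f s) * Defs.c1 g' + (c2 f' * c2 (g s) + c2 (f s) * c2 g')
     - (c3 f' * c3 (g s) + c3 (f s) * c3 g') - (c4 f' * c4 (g s) + c4 (f s) * c4 g'))
    by (unfold h; ring).
  exact (is_derive_minus _ _ s _ _
    (is_derive_minus _ _ s _ _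
      (is_derive_plus _ _ s _ _ (is_derive_Rmult _ _ s _ _ F1 G1) (is_derive_Rmult _ _ s _ _ F2 G2))
      (is_derive_Rmult _ _ s _ _ F3 G3))
    (is_derive_Rmult _ _ s _ _ F4 G4)).
Qed.

Section RectifyingCurve.

Variables (a b : Rbar) (beta T N1 N2 N3 : R -> V4) (kappa k r : R -> R)
  (eT eN1 et en1 en2 : R).

Hypothesis frenet : semi_real_frenet_curve a b beta T N1 N2 N3 kappa k r eT eN1 et en1 en2.

Let sign_eT : is_sign eT := proj1 frenet.
Let sign_eN1 : is_sign eN1 := proj1 (proj2 frenet).
Let sign_et : is_sign et := proj1 (proj2 (proj2 frenet)).
Let sign_en1 : is_sign en1 := proj1 (proj2 (proj2 (proj2 frenet))).
Let sign_en2 : is_sign en2 := proj1 (proj2 (proj2 (proj2 (proj2 frenet)))).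

Lemma is_derive_h_beta_T (s : R) : in_I a b s ->
  is_derive (fun t => h (beta t) (T t)) s (eT + eN1 * kappa s * h (beta s) (N1 s)).
Proof.
  intros Hs.
  pose proof frenet as (_ & _ & _ & _ & _ & frame).
  destruct (frame s Hs) as (Dbeta & hTT & _ & _ & _ & _ & _ & _ & _ & _ & _ & DT & _).
  pose proof (is_derive_h _ _ s _ _ Dbeta DT) as X.
  rewrite h_vscalr, hTT in X; exact X.
Qed.

Lemma is_derive_h_beta_N1 (s : R) : in_I a b s ->
  is_derive (fun t => h (beta t) (N1 t)) s
    (- et * eN1 * kappa s * h (beta s) (T s) + en1 * k s * h (beta s) (N2 s)).
Proof.
  intros Hs.
  pose proof frenet as (_ & _ & _ & _ & _ & frame).
  destruct (frame s Hs) as (Dbeta & _ & _ & _ & _ & hTN1 & _ & _ & _ & _ & _ & _ & DN1 & _).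
  pose proof (is_derive_h _ _ s _ _ Dbeta DN1) as X.
  rewrite h_vaddr, !h_vscalr, hTN1, Rplus_0_l in X; exact X.
Qed.

Lemma is_derive_h_beta_N2 (s : R) : in_I a b s ->
  is_derive (fun t => h (beta t) (N2 t)) s
    (- et * k s * h (beta s) (N1 s)
     + en1 * (r s - et * eT * eN1 * kappa s) * h (beta s) (N3 s)).
Proof.
  intros Hs.
  pose proof frenet as (_ & _ & _ & _ & _ & frame).
  destruct (frame s Hs) as (Dbeta & _ & _ & _ & _ & _ & hTN2 & _ & _ & _ & _ & _ & _ & DN2 & _).
  pose proof (is_derive_h _ _ s _ _ Dbeta DN2) as X.
  rewrite h_vaddr, !h_vscalr, hTN2, Rplus_0_l in X; exact X.
Qed.

Lemma is_derive_h_beta_N3 (s : R) : in_I a b s ->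
  is_derive (fun t => h (beta t) (N3 t)) s
    (- en2 * (r s - et * eT * eN1 * kappa s) * h (beta s) (N2 s)).
Proof.
  intros Hs.
  pose proof frenet as (_ & _ & _ & _ & _ & frame).
  destruct (frame s Hs) as (Dbeta & _ & _ & _ & _ & _ & _ & hTN3 & _ & _ & _ & _ & _ & _ & DN3).
  pose proof (is_derive_h _ _ s _ _ Dbeta DN3) as X.
  rewrite h_vscalr, hTN3, Rplus_0_l in X; exact X.
Qed.

Variables (lambda mu nu : R -> R).

Hypothesis rect : rectifying a b beta T N2 N3 lambda mu nu.

Lemma h_beta_N1_eq0 (s : R) : in_I a b s -> h (beta s) (N1 s) = 0.
Proof.
  intros Hs; destruct (rect s Hs) as (_ & _ & _ & ->).
  pose proof frenet as (_ & _ & _ & _ & _ & frame).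
  destruct (frame s Hs) as (_ & _ & _ & _ & _ & hTN1 & _ & _ & hN1N2 & hN1N3 & _).
  rewrite !h_vaddl, !h_vscall, hTN1, (hC (N2 s)), hN1N2, (hC (N3 s)), hN1N3; ring.
Qed.

Variables (C0 C1 C2 : R).

Hypothesis curvatures : forall s, in_I a b s ->
  kappa s = C0 /\ k s = C1 /\ r s - et * eT * eN1 * kappa s = C2.

Lemma h_beta_N2_prop_h_beta_T (s : R) : in_I a b s ->
  en1 * C1 * h (beta s) (N2 s) = et * eN1 * C0 * h (beta s) (T s).
Proof.
  intros Hs; destruct (curvatures s Hs) as (E0 & E1 & _).
  pose proof (is_derive_const_on a b _ 0 s _ Hs h_beta_N1_eq0 (is_derive_h_beta_N1 s Hs)) as X.
  rewrite E0, E1 in X; lra.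
Qed.

Lemma h_beta_N3_const (s : R) : in_I a b s ->
  C1 * C2 * h (beta s) (N3 s) = et * eN1 * C0 * eT.
Proof.
  intros Hs; destruct (curvatures s Hs) as (E0 & E1 & E2).
  pose proof (is_derive_eq_on a b _ _ s _ _ Hs h_beta_N2_prop_h_beta_T
    (is_derive_scal _ s (en1 * C1) _ (is_derive_h_beta_N2 s Hs))
    (is_derive_scal _ s (et * eN1 * C0) _ (is_derive_h_beta_T s Hs))) as X.
  rewrite E2, E1, E0, (h_beta_N1_eq0 s Hs), !Rmult_0_r, Rplus_0_l, Rplus_0_r in X.
  rewrite <- X.
  transitivity (en1 * en1 * (C1 * C2 * h (beta s) (N3 s))); [|ring].
  rewrite (sign_sqr en1 sign_en1); ring.
Qed.

Hypotheses (C0_neq0 : C0 <> 0) (C1_neq0 : C1 <> 0) (C2_neq0 : C2 <> 0).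

Lemma h_beta_N2_eq0 (s : R) : in_I a b s -> h (beta s) (N2 s) = 0.
Proof.
  intros Hs; destruct (curvatures s Hs) as (_ & _ & E2).
  assert (D_const : forall t, in_I a b t ->
            h (beta t) (N3 t) = et * eN1 * C0 * eT / (C1 * C2)).
  { intros t Ht; rewrite <- (h_beta_N3_const t Ht); field; split; assumption. }
  pose proof (is_derive_const_on a b _ _ s _ Hs D_const (is_derive_h_beta_N3 s Hs)) as X.
  rewrite E2 in X.
  pose proof (sign_neq0 en2 sign_en2).
  apply Rmult_integral in X as [X | X]; [|exact X].
  apply Rmult_integral in X as [X | X]; lra.
Qed.

Lemma h_beta_N3_eq0 (s : R) : in_I a b s -> h (beta s) (N3 s) = 0.
Proof.
  intros Hs; destruct (curvatures s Hs) as (_ & _ & E2).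
  pose proof (is_derive_const_on a b _ _ s _ Hs h_beta_N2_eq0
                (is_derive_h_beta_N2 s Hs)) as X.
  rewrite E2, (h_beta_N1_eq0 s Hs), Rmult_0_r, Rplus_0_l in X.
  pose proof (sign_neq0 en1 sign_en1).
  apply Rmult_integral in X as [X | X]; [|exact X].
  apply Rmult_integral in X as [X | X]; lra.
Qed.

Lemma rectifying_const_curvatures_False : Rbar_lt a b -> False.
Proof.
  intros Hab; destruct (in_I_inhabited a b Hab) as [s Hs].
  pose proof (h_beta_N3_const s Hs) as X.
  rewrite (h_beta_N3_eq0 s Hs), Rmult_0_r in X.
  refine (Rmult_integral_contrapositive_currified _ _ _ (sign_neq0 eT sign_eT) (eq_sym X)).
  repeat apply Rmult_integral_contrapositive_currified;
    auto using sign_neq0.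
Qed.

End RectifyingCurve.

Theorem corollary4p1 :
  forall (a b : Rbar) (beta T N1 N2 N3 : R -> V4) (kappa k r : R -> R)
         (eT eN1 et en1 en2 : R) (lambda mu nu : R -> R)
         (C0 C1 C2 : R),
    Rbar_lt a b ->
    semi_real_frenet_curve a b beta T N1 N2 N3 kappa k r eT eN1 et en1 en2 ->
    rectifying a b beta T N2 N3 lambda mu nu ->
    C0 <> 0 -> C1 <> 0 -> C2 <> 0 ->
    (forall s, in_I a b s ->
       kappa s = C0 /\ k s = C1 /\ r s - et * eT * eN1 * kappa s = C2) ->
    False.
Proof.
  intros a b beta T N1 N2 N3 kappa k r eT eN1 et en1 en2 lambda mu nu C0 C1 C2
    Hab frenet rect HC0 HC1 HC2 curvatures.
  exact (rectifying_const_curvatures_False a b beta T N1 N2 N3 kappa k r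
           eT eN1 et en1 en2 frenet lambda mu nu rect C0 C1 C2 curvatures
           HC0 HC1 HC2 Hab).
Qed.
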